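(* Let $q$ be a power of $2$, $c\in\mathbb{F}_q^*$, and $f(X)=X(X^{q-1}-c)^{q+1}$ as a map $\mathbb{F}_{q^2}\to\mathbb{F}_{q^2}$. Let $\mathrm{Fix}(f)=\{\alpha\in\mathbb{F}_{q^2}:f(\alpha)=\alpha\}$. Then $|\mathrm{Fix}(f)|=2q-1$ if $\operatorname{Tr}(1/c)=1$, and $|\mathrm{Fix}(f)|=1$ if $\operatorname{Tr}(1/c)=0$.
   Context: $\operatorname{Tr}:\mathbb{F}_q\to\mathbb{F}_2$ denotes the absolute trace function. *)

From HB Require Import structures.
From mathcomp Require Import all_boot all_order all_algebra all_field.
Set Implicit Arguments. Unset Strict Implicit. Unset Printing Implicit Defensive.
Import GRing.Theory.
Local Open Scope ring_scope.

(* Absolute trace F_q -> F_2 with q = 2^k, for x in the subfield F_q of a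
   field L of characteristic 2: Tr(x) = x + x^2 + x^4 + ... + x^(2^(k-1)). *)
Definition absTr (L : fieldType) (k : nat) (x : L) : L :=
  \sum_(i < k) x ^+ (2 ^ i)%N.

Definition fmap (L : fieldType) (q : nat) (c : L) (x : L) : L :=
  x * (x ^+ q.-1 - c) ^+ q.+1.

Definition Fix (L : finFieldType) (q : nat) (c : L) : {set L} :=
  [set a : L | fmap q c a == a].

From HB Require Import structures.
From mathcomp Require Import all_boot all_order all_algebra all_field.
From mathcomp Require Import ring zify.
Import GRing.Theory.
Local Open Scope ring_scope.
Set Implicit Arguments. Unset Strict Implicit. Unset Printing Implicit Defensive.

(* For x <> 0 put y = x^(q-1); then y^(q+1) = 1, and since y^q = 1/y the
   Frobenius gives (y + c)^(q+1) = 1 + c (y^q + y + c).  So x is fixed iff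
   y^q + y = c, i.e. iff y^2 + c y + 1 = 0: the nonzero fixed points are the
   roots of Y^2 + c Y + 1 with Y = X^(q-1).  With z = y/c this is the
   Artin-Schreier equation z^2 + z = 1/c^2, and telescoping its Frobenius
   iterates gives z^q + z = Tr(1/c); hence a root forces Tr(1/c) = 1.
   Conversely, if Tr(1/c) = 1 the same computation done with polynomials shows
   that Y^2 + c Y + 1 divides X^(q^2-1) - 1, which splits into distinct
   linear factors over F_(q^2), so all 2(q-1) of its roots lie there. *)

Section Char2.
Variable R : comNzRingType.
Hypothesis pcharR2 : (2%N \in [pchar R])%R.

Lemma exprD_2pow i (x y : R) : (x + y) ^+ (2 ^ i) = x ^+ (2 ^ i) + y ^+ (2 ^ i).
Proof. by apply: exprDn_pchar; rewrite (eq_pnat _ (pcharf_eq pcharR2)) pnatX pnat_id. Qed.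

Lemma artin_schreier_telescope (z a : R) i :
  z ^+ (2 ^ i) + z + \sum_(j < i) a ^+ (2 ^ j)
  = \sum_(j < i) (z ^+ 2 + z + a) ^+ (2 ^ j).
Proof.
have two0 : 2 = 0 :> R := pcharf0 pcharR2.
elim: i => [|i IH]; first by rewrite !big_ord0 expn0 expr1 addr0 addrr_pchar2.
rewrite !big_ord_recr /= -IH !exprD_2pow -exprM -expnS.
ring: two0.
Qed.

End Char2.

Lemma norm1_trace_factor (R : comNzRingType) q (c y : R) : y ^+ q.+1 = 1 ->
  y ^+ q + y + c = y ^+ q * (y ^+ 2 + c * y + 1).
Proof.
move=> hy; have hy2 : y ^+ q * y ^+ 2 = y by rewrite expr2 mulrA -exprSr hy mul1r.
rewrite !mulrDr hy2 mulrCA -exprSr hy; ring.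
Qed.

Lemma absTr_sqr (L : fieldType) k (b : L) : (0 < k)%N -> b ^+ (2 ^ k) = b ->
  absTr k (b ^+ 2) = absTr k b.
Proof.
case: k => // k _ hb; rewrite /absTr big_ord_recr big_ord_recl /=.
rewrite -exprM mulnC -expnSr hb addrC expn0 expr1; congr (_ + _).
by apply: eq_bigr => j _; rewrite -exprM /bump /= add1n expnS.
Qed.

Definition fixpoly (L : fieldType) q (c : L) : {poly L} :=
  ('X^(q.-1)) ^+ 2 + c%:P * 'X^(q.-1) + 1.

Lemma size_fixpoly (L : fieldType) q (c : L) : (1 < q)%N ->
  size (fixpoly q c) = (2 * q.-1).+1.
Proof.
move=> q_gt1; rewrite /fixpoly -addrA size_polyDl -exprM size_polyXn mulnC //.
rewrite (leq_ltn_trans (size_polyD _ _)) // size_poly1 mul_polyC.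
have := size_scale_leq c ('X^(q.-1) : {poly L}).
by rewrite size_polyXn gtn_max; lia.
Qed.

Section Char2Field.
Variables (L : fieldType) (k : nat) (c : L).
Hypotheses (pcharL2 : (2%N \in [pchar L])%R) (k_gt0 : (0 < k)%N).
Hypotheses (cq : c ^+ (2 ^ k) = c) (c_neq0 : c != 0).
Local Notation q := (2 ^ k)%N.

Lemma norm_addC_eq1 y : y ^+ q.+1 = 1 ->
  ((y + c) ^+ q.+1 == 1) = (y ^+ 2 + c * y + 1 == 0).
Proof.
move=> hy; have y_neq0 : y ^+ q != 0.
  by apply: contra_eq_neq hy; rewrite exprS mulrC => ->; rewrite mul0r eq_sym oner_eq0.
have -> : (y + c) ^+ q.+1 = 1 + c * (y ^+ q + y + c).
  by rewrite exprS mulrC exprD_2pow // cq -hy exprS; ring.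
rewrite -subr_eq0 addrC addKr mulf_eq0 (negbTE c_neq0) /=.
by rewrite norm1_trace_factor // mulf_eq0 (negbTE y_neq0).
Qed.

Lemma fixpoly_dvd_trace :
  fixpoly q c %| c^-1%:P * ('X^(q.-1)) ^+ q + c^-1%:P * 'X^(q.-1) + (absTr k c^-1)%:P.
Proof.
set B := c^-1%:P; set Y : {poly L} := 'X^(q.-1); set C := c%:P.
have BC : B * C = 1 by rewrite -polyCM mulVf.
have Bq : B ^+ q = B by rewrite -rmorphXn exprVn cq.
have pchar2 : (2%N \in [pchar {poly L}])%R by rewrite pchar_poly.
have := artin_schreier_telescope pchar2 (B * Y) (B ^+ 2) k.
have -> : \sum_(j < k) (B ^+ 2) ^+ (2 ^ j) = (absTr k c^-1)%:P.
  rewrite -(absTr_sqr k_gt0); last by rewrite exprVn cq.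
  by rewrite rmorph_sum; apply: eq_bigr => j _; rewrite !rmorphXn.
rewrite exprMn Bq => ->.
apply: (big_ind (fun p => fixpoly q c %| p)) => [|p r|j _]; first exact: dvdp0.
  exact: dvdp_add.
apply: dvdp_exp; first exact: expn_gt0.
have -> : (B * Y) ^+ 2 + B * Y + B ^+ 2 = B ^+ 2 * fixpoly q c + B * Y * (1 - B * C).
  rewrite /fixpoly -/Y -/C; clearbody B Y C; ring.
by rewrite BC subrr mulr0 addr0 dvdp_mull.
Qed.

End Char2Field.

Section RootCounting.
Variable F : finFieldType.

Lemma card_roots_lt_size (p : {poly F}) : p != 0 ->
  (#|[set x | root p x]| < size p)%N.
Proof.
move=> p_neq0; rewrite cardE; apply: max_poly_roots => //; last exact: enum_uniq.
by apply/allP => x; rewrite mem_enum inE.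
Qed.

Lemma card_roots_dvdp (p d : {poly F}) : p != 0 -> d %| p ->
  #|[set x | root p x]| = (size p).-1 -> #|[set x | root d x]| = (size d).-1.
Proof.
move=> p_neq0 /dvdpP[s def_p] full_p.
have /andP[s_neq0 d_neq0] : (s != 0) && (d != 0).
  by rewrite -negb_or -mulf_eq0 -def_p.
have roots_p : [set x | root p x] \subset [set x | root s x] :|: [set x | root d x].
  by apply/subsetP => x; rewrite !inE def_p rootM.
have := leq_trans (subset_leq_card roots_p) (leq_card_setU _ _).
have := card_roots_lt_size s_neq0; have := card_roots_lt_size d_neq0.
rewrite full_p def_p size_mul //.
move: #|[set x | root s x]| #|[set x | root d x]| (size s) (size d) => a b m n; lia.
Qed.

Lemma expf_card_pred (x : F) : x != 0 -> x ^+ #|F|.-1 = 1.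
Proof.
move=> x_neq0; apply: (mulfI x_neq0); rewrite mulr1 -exprS prednK ?expf_card //.
exact: ltnW (finNzRing_gt1 F).
Qed.

Lemma card_roots_Xn_sub1 :
  #|[set x : F | root ('X^(#|F|.-1) - 1) x]| = (size ('X^(#|F|.-1) - 1 : {poly F})).-1.
Proof.
have F_gt1 := finNzRing_gt1 F.
rewrite -polyC1 size_XnsubC ?ltn_predRL //= -[in RHS](cardsC1 0).
apply: eq_card => x.
rewrite !inE rootE !hornerE subr_eq0; have [->|/expf_card_pred ->] := eqVneq x 0.
  by rewrite expr0n eqn0Ngt ltn_predRL F_gt1 eq_sym oner_eq0.
by rewrite eqxx.
Qed.

End RootCounting.

Section FixedPoints.
Variables (L : finFieldType) (k : nat) (c : L).
Hypotheses (k_gt0 : (0 < k)%N) (cardL : #|L| = ((2 ^ k) ^ 2)%N).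
Hypotheses (cq : c ^+ (2 ^ k) = c) (c_neq0 : c != 0).
Local Notation q := (2 ^ k)%N.

Let pcharL2 : (2%N \in [pchar L])%R.
Proof. by apply: (card_finPcharP (n := (k * 2)%N)); rewrite // cardL expnM. Qed.

Let q_gt1 : (1 < q)%N.
Proof. by rewrite -{1}(expn0 2) ltn_exp2l. Qed.

Lemma exp_pred_norm1 (x : L) : x != 0 -> (x ^+ q.-1) ^+ q.+1 = 1.
Proof.
move=> x_neq0; rewrite -exprM -(expf_card_pred x_neq0) cardL.
by congr (_ ^+ _); case: q q_gt1 => // n _; rewrite -mulnn /=; lia.
Qed.

Lemma fmap_fixed_iff (x : L) : x != 0 -> (fmap q c x == x) = root (fixpoly q c) x.
Proof.
move=> x_neq0; rewrite /fmap -[X in _ == X]mulr1 (inj_eq (mulfI x_neq0)).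
rewrite (oppr_pchar2 pcharL2) norm_addC_eq1 ?exp_pred_norm1 //.
by rewrite rootE /fixpoly !hornerE.
Qed.

Lemma root_fixpoly0 : ~~ root (fixpoly q c) 0.
Proof.
rewrite rootE /fixpoly !hornerE expr0n eqn0Ngt ltn_predRL q_gt1 /=.
by rewrite expr0n mulr0 !add0r oner_eq0.
Qed.

Lemma Fix_fixpoly : Fix q c = 0 |: [set x | root (fixpoly q c) x].
Proof.
apply/setP => x; rewrite !inE; have [->|x_neq0] := eqVneq x 0.
  by rewrite /fmap mul0r eqxx.
exact: fmap_fixed_iff.
Qed.

Lemma root_fixpoly_absTr (x : L) : root (fixpoly q c) x -> absTr k c^-1 = 1.
Proof.
move=> root_x; have x_neq0 : x != 0.
  by apply: contraTneq root_x => ->; exact: root_fixpoly0.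
have := root_dvdp (fixpoly_dvd_trace pcharL2 k_gt0 cq c_neq0) root_x.
move: root_x; rewrite !rootE /fixpoly !hornerE; set y := x ^+ q.-1 => /eqP conic.
have y_trace : y ^+ q + y = - c.
  apply/eqP; rewrite -addr_eq0 norm1_trace_factor ?conic ?mulr0 //.
  exact: exp_pred_norm1.
by rewrite -mulrDr y_trace mulrN mulVf // addrC subr_eq0 => /eqP.
Qed.

Lemma fixpoly_dvd_Xn_sub1 : absTr k c^-1 = 1 -> fixpoly q c %| 'X^(#|L|.-1) - 1.
Proof.
move=> trace1; have := fixpoly_dvd_trace pcharL2 k_gt0 cq c_neq0.
rewrite trace1; set B := c^-1%:P; set Y : {poly L} := 'X^(q.-1); set C := c%:P => dvd_m.
have -> : 'X^(#|L|.-1) = Y ^+ q.+1.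
  rewrite -exprM; congr ('X ^+ _); rewrite cardL.
  by case: q q_gt1 => // n _; rewrite -mulnn /=; lia.
have BC : B * C = 1 by rewrite -polyCM mulVf.
have -> : Y ^+ q.+1 - 1 = Y * C * (B * Y ^+ q + B * Y + 1) - fixpoly q c
                          + (Y ^+ q.+1 + Y ^+ 2) * (1 - B * C).
  by rewrite /fixpoly -/Y -/C !exprS; clearbody B Y C; move: (Y ^+ q) => Yq; ring.
by rewrite BC subrr mulr0 addr0 dvdp_sub ?dvdp_mull.
Qed.

Lemma card_roots_fixpoly : absTr k c^-1 = 1 ->
  #|[set x | root (fixpoly q c) x]| = (2 * q.-1)%N.
Proof.
move=> trace1; rewrite -[RHS]/((2 * q.-1).+1.-1) -(size_fixpoly c q_gt1).
apply: (card_roots_dvdp _ (fixpoly_dvd_Xn_sub1 trace1) (card_roots_Xn_sub1 L)).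
by rewrite -size_poly_eq0 -polyC1 size_XnsubC // ltn_predRL finNzRing_gt1.
Qed.

End FixedPoints.

Theorem mainTheorem7 (k : nat) (L : finFieldType) (c : L) :
  (0 < k)%N -> #|L| = ((2 ^ k) ^ 2)%N ->
  c ^+ (2 ^ k) = c -> c != 0 ->
  (absTr k c^-1 = 1 -> #|Fix (2 ^ k) c| = (2 * 2 ^ k - 1)%N) /\
  (absTr k c^-1 = 0 -> #|Fix (2 ^ k) c| = 1%N).
Proof.
move=> k_gt0 cardL cq c_neq0.
rewrite (Fix_fixpoly k_gt0 cardL cq c_neq0) cardsU1 inE.
rewrite (negbTE (root_fixpoly0 _ k_gt0)); split => trace.
  by rewrite card_roots_fixpoly //; have := expn_gt0 2 k; lia.
suff -> : [set x | root (fixpoly (2 ^ k) c) x] = set0 by rewrite cards0.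
apply/setP => x; rewrite !inE; apply/negP => /(root_fixpoly_absTr k_gt0 cardL cq c_neq0).
by rewrite trace => /eqP; rewrite eq_sym oner_eq0.
Qed.
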